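(* For every prime power $q$ of characteristic $p\ge3$, $J_{\mathrm{JQ}}(q)=J_{\mathrm{JI}}(q)=\left\lfloor\frac{q+5}{6}\right\rfloor$.
   Context: Over $\mathbb{F}_q$ ($q$ odd): the Jacobi quartic curves are $E_{\mathrm{JQ},u}: Y^2=X^4+2uX^2+1$ for $u\in\mathbb{F}_q\setminus\{1,-1\}$; the Jacobi intersection curves are $E_{\mathrm{JI},u}: X^2+Y^2=1,\ uX^2+Z^2=1$ for $u\in\mathbb{F}_q\setminus\{0,1\}$. These are elliptic curves, and the $j$-invariant of such a curve is that of any Weierstrass model birationally equivalent to it. $J_{\mathrm{JQ}}(q)$ and $J_{\mathrm{JI}}(q)$ denote the number of distinct $j$-invariants occurring in the respective families (over the indicated parameter ranges). *)

From HB Require Import structures.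
From mathcomp Require Import all_boot all_order all_algebra all_field.
Set Implicit Arguments. Unset Strict Implicit. Unset Printing Implicit Defensive.
Import GRing.Theory.
Local Open Scope ring_scope.

(* Generalized Weierstrass equation
   y^2 + a1 x y + a3 y = x^3 + a2 x^2 + a4 x + a6, and its j-invariant
   j = c4^3 / Delta (standard formulas, Silverman III.1). *)
Record weier (F : fieldType) := Weier { wa1 : F; wa2 : F; wa3 : F; wa4 : F; wa6 : F }.

Definition weier_j (F : fieldType) (E : weier F) : F :=
  let: Weier a1 a2 a3 a4 a6 := E in
  let b2 := a1 ^+ 2 + 4 * a2 in
  let b4 := 2 * a4 + a1 * a3 in
  let b6 := a3 ^+ 2 + 4 * a6 in
  let b8 := a1 ^+ 2 * a6 + 4 * a2 * a6 - a1 * a3 * a4 + a2 * a3 ^+ 2 - a4 ^+ 2 in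
  let c4 := b2 ^+ 2 - 24 * b4 in
  let disc := - b2 ^+ 2 * b8 - 8 * b4 ^+ 3 - 27 * b6 ^+ 2 + 9 * b2 * b4 * b6 in
  c4 ^+ 3 / disc.

(* Weierstrass model birationally equivalent to the Jacobi quartic
   Y^2 = X^4 + 2uX^2 + 1 :  v^2 = w^3 - 4u w^2 + (4u^2 - 4) w. *)
Definition JQ_weier (F : fieldType) (u : F) : weier F :=
  Weier 0 (- (4 * u)) 0 (4 * u ^+ 2 - 4) 0.

(* Weierstrass model birationally equivalent to the Jacobi intersection
   X^2 + Y^2 = 1, uX^2 + Z^2 = 1 :  v^2 = w (w - 1) (w - u). *)
Definition JI_weier (F : fieldType) (u : F) : weier F :=
  Weier 0 (- (1 + u)) 0 u 0.

Definition j_JQ (F : fieldType) (u : F) : F := weier_j (JQ_weier u).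
Definition j_JI (F : fieldType) (u : F) : F := weier_j (JI_weier u).

Definition JQ_jset (F : finFieldType) : {set F} :=
  [set j_JQ u | u : F & (u != 1) && (u != -1)].
Definition JI_jset (F : finFieldType) : {set F} :=
  [set j_JI u | u : F & (u != 0) && (u != 1)].

Definition J_JQ (F : finFieldType) : nat := #|JQ_jset F|.
Definition J_JI (F : finFieldType) : nat := #|JI_jset F|.

(** Both families are Legendre curves y^2 = x (x - 1) (x - l) after a change of
    parameter: l = u for Jacobi intersections and l = (u - 1) / (u + 1) for Jacobi
    quartics, the latter mapping F \ {1, -1} onto F \ {0, 1}. So both counts equal the
    number of values of j(l) = 256 (l^2 - l + 1)^3 / (l^2 (l - 1)^2) on F \ {0, 1}.
    The numerator of j(m) - j(l) factors into the six terms m - s(l), s running over the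
    anharmonic group {l, 1 - l, 1/l, 1/(1 - l), l/(l - 1), (l - 1)/l}, so the fibres of j
    are the orbits of that group. They have 6 elements except for the orbits of the fixed
    points: the harmonic orbit {-1, 2, 1/2} (j = 1728) and the roots of l^2 - l + 1
    (j = 0, two of them or none), which in characteristic 3 all collapse to {-1}.
    In each case #|F| - 2 = 6 (#generic values) + #exceptional points then yields
    floor((#|F| + 5) / 6) values. *)

From HB Require Import structures.
From mathcomp Require Import all_boot all_order all_algebra all_field.
From mathcomp Require Import ring zify.

Set Implicit Arguments. Unset Strict Implicit. Unset Printing Implicit Defensive.
Import GRing.Theory.
Local Open Scope ring_scope.

Lemma card_uniform_fibers (T U : finType) (f : T -> U) (A : {set T}) n :
  {in A, forall a, #|[set b in A | f b == f a]| = n} -> #|A| = (n * #|f @: A|)%N.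
Proof.
move=> fibA; rewrite -sum1_card (partition_big f (mem (f @: A))) /=; last first.
  by move=> a aA; apply: imset_f.
rewrite mulnC -sum_nat_const; apply: eq_bigr => _ /imsetP[a aA ->].
by rewrite -(fibA a aA) -sum1_card; apply: eq_bigl => b; rewrite inE.
Qed.

Lemma card_disjointU (T : finType) (A B : {set T}) :
  [disjoint A & B] -> #|A :|: B| = (#|A| + #|B|)%N.
Proof. by move=> dAB; apply/eqP; rewrite (leq_card_setU A B).2. Qed.

Lemma neq_of_mul_sub (F : fieldType) (d k a b : F) :
  (a - b) * d = k -> k != 0 -> a != b.
Proof. by move=> <-; apply: contraNneq => ->; rewrite subrr mul0r. Qed.

Lemma eq0_scale (F : fieldType) (c x y : F) :
  c != 0 -> x = y * c -> (x == 0) = (y == 0).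
Proof. by move=> c0 ->; rewrite mulf_eq0 (negbTE c0) orbF. Qed.

Lemma natr_exp2_neq0 (F : fieldType) n : (2 : F) != 0 -> (2 ^ n)%:R != 0 :> F.
Proof. by move=> two; rewrite natrX expf_neq0. Qed.

Section Legendre.
Variable F : fieldType.

Definition phi6 (l : F) := l ^+ 2 - l + 1.

Definition legendre_j (l : F) := 256 * phi6 l ^+ 3 / (l ^+ 2 * (l - 1) ^+ 2).

Definition nonsingular (l : F) := (l != 0) && (l != 1).

Definition anharmonic (l : F) : seq F :=
  [:: l; 1 - l; l^-1; (1 - l)^-1; l / (l - 1); (l - 1) / l].

(* The fixed points of the non-identity elements of the anharmonic group. *)
Definition exceptional (l : F) := (l + 1) * (l - 2) * (2 * l - 1) * phi6 l == 0.

Lemma nonsingularE l : nonsingular l = (l * (l - 1) != 0).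
Proof. by rewrite mulf_eq0 negb_or subr_eq0. Qed.

Lemma anharmonic_ind (P : F -> Prop) l :
  P l -> P (1 - l) -> P l^-1 -> P (1 - l)^-1 -> P (l / (l - 1)) -> P ((l - 1) / l) ->
  {in anharmonic l, forall m, P m}.
Proof.
move=> ? ? ? ? ? ? m; rewrite !inE.
by do 5 case/predU1P => [-> //|]; move/eqP ->.
Qed.

Definition anharmonic_poly (l m : F) :=
  (m - l) * (m - (1 - l)) * (l * m - 1) * ((1 - l) * m - 1)
  * ((l - 1) * m - l) * (l * m - (l - 1)).

Lemma legendre_j_sub l m : nonsingular l -> nonsingular m ->
  (legendre_j m - legendre_j l) * (m ^+ 2 * (m - 1) ^+ 2 * (l ^+ 2 * (l - 1) ^+ 2))
  = - 256 * anharmonic_poly l m.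
Proof.
rewrite !nonsingularE !mulf_eq0 !negb_or => /andP[l0 l1] /andP[m0 m1].
by rewrite /legendre_j /anharmonic_poly /phi6; field; rewrite l0 l1 m0 m1.
Qed.

Section Orbit.
Variable l : F.
Hypothesis nsl : nonsingular l.

Let l0 : l != 0. Proof. by case/andP: nsl. Qed.
Let l1 : l - 1 != 0. Proof. by case/andP: nsl; rewrite subr_eq0. Qed.
Let l1n : 1 - l != 0. Proof. by rewrite -opprB oppr_eq0. Qed.
Let nz := (l0, l1, l1n).

(* Each element of the group is a Moebius map, so it pulls a polynomial condition back
   to itself times a power of its denominator. *)
Lemma anharmonic_nonsingular : {in anharmonic l, forall m, nonsingular m}.
Proof.
have scale c m : c != 0 -> m * (m - 1) = l * (l - 1) * c -> nonsingular m.
  by move=> c0 E; rewrite nonsingularE (eq0_scale c0 E) -nonsingularE.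
apply: anharmonic_ind => //.
- by apply: (scale 1); rewrite ?oner_eq0 //; ring.
- apply: (scale (- (l ^+ 3)^-1)); first by rewrite oppr_eq0 invr_eq0 expf_neq0.
  by field; rewrite ?nz.
- apply: (scale (- ((1 - l) ^+ 3)^-1)); first by rewrite oppr_eq0 invr_eq0 expf_neq0.
  by field; rewrite ?nz.
- apply: (scale ((l - 1) ^+ 3)^-1); first by rewrite invr_eq0 expf_neq0.
  by field; rewrite ?nz.
- apply: (scale (- (l ^+ 3)^-1)); first by rewrite oppr_eq0 invr_eq0 expf_neq0.
  by field; rewrite ?nz.
Qed.

Lemma anharmonic_polyE m : (anharmonic_poly l m == 0) = (m \in anharmonic l).
Proof.
apply/idP/idP; last first.
  move: m; apply: anharmonic_ind; apply/eqP; rewrite /anharmonic_poly;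
    by field; rewrite ?nz.
have inv_eq (c x e : F) : c != 0 -> c * x - e == 0 -> x = c^-1 * e.
  by move=> c0; rewrite subr_eq0 => /eqP <-; rewrite (mulKf c0).
rewrite /anharmonic_poly !mulf_eq0 -!orbA !inE.
case/orP=> [/eqP/subr0_eq ->|]; first by rewrite eqxx.
case/orP=> [/eqP/subr0_eq ->|]; first by rewrite eqxx orbT.
case/orP=> [/(inv_eq _ _ _ l0) ->|]; first by rewrite mulr1 eqxx !orbT.
case/orP=> [/(inv_eq _ _ _ l1n) ->|]; first by rewrite mulr1 eqxx !orbT.
by case/orP=> [/(inv_eq _ _ _ l1)|/(inv_eq _ _ _ l0)] ->; rewrite mulrC eqxx !orbT.
Qed.

Lemma exceptional_anharmonic :
  {in anharmonic l, forall m, exceptional m = exceptional l}.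
Proof.
apply: anharmonic_ind => //; rewrite /exceptional /phi6.
- by apply: (eq0_scale (c := -1)); rewrite ?oppr_eq0 ?oner_eq0 //; ring.
- apply: (eq0_scale (c := (l ^+ 5)^-1)); first by rewrite invr_eq0 expf_neq0.
  by field; rewrite ?nz.
- apply: (eq0_scale (c := - ((1 - l) ^+ 5)^-1)); first by rewrite oppr_eq0 invr_eq0 expf_neq0.
  by field; rewrite ?nz.
- apply: (eq0_scale (c := - ((l - 1) ^+ 5)^-1)); first by rewrite oppr_eq0 invr_eq0 expf_neq0.
  by field; rewrite ?nz.
- apply: (eq0_scale (c := - (l ^+ 5)^-1)); first by rewrite oppr_eq0 invr_eq0 expf_neq0.
  by field; rewrite ?nz.
Qed.

Lemma uniq_anharmonic : ~~ exceptional l -> uniq (anharmonic l).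
Proof.
rewrite /exceptional !mulf_eq0 !negb_or => /andP[/andP[/andP[lp1 lm2] l2] q].
(* Each difference of two orbit points, times a suitable denominator [d], is a
   product [k] of factors that are nonzero off the exceptional points. *)
rewrite /= !inE !negb_or ?andbT; repeat (apply/andP; split);
  [ apply: (neq_of_mul_sub (d := 1) (k := 2 * l - 1))
  | apply: (neq_of_mul_sub (d := l) (k := (l - 1) * (l + 1)))
  | apply: (neq_of_mul_sub (d := l - 1) (k := phi6 l))
  | apply: (neq_of_mul_sub (d := l - 1) (k := l * (l - 2)))
  | apply: (neq_of_mul_sub (d := l) (k := phi6 l))
  | apply: (neq_of_mul_sub (d := - l) (k := phi6 l))
  | apply: (neq_of_mul_sub (d := 1 - l) (k := l * (l - 2)))
  | apply: (neq_of_mul_sub (d := 1 - l) (k := phi6 l))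
  | apply: (neq_of_mul_sub (d := l) (k := (1 - l) * (l + 1)))
  | apply: (neq_of_mul_sub (d := l * (l - 1)) (k := 2 * l - 1))
  | apply: (neq_of_mul_sub (d := l * (1 - l)) (k := phi6 l))
  | apply: (neq_of_mul_sub (d := - l) (k := l - 2))
  | apply: (neq_of_mul_sub (d := 1 - l) (k := l + 1))
  | apply: (neq_of_mul_sub (d := l * (1 - l)) (k := phi6 l))
  | apply: (neq_of_mul_sub (d := l * (l - 1)) (k := 2 * l - 1)) ].
all: by [rewrite ?mulf_neq0 | rewrite /phi6; field; rewrite ?nz].
Qed.

End Orbit.

Hypothesis two : (2 : F) != 0.

Lemma eq_legendre_j l m : nonsingular l -> nonsingular m ->
  (legendre_j m == legendre_j l) = (m \in anharmonic l).
Proof.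
move=> nsl nsm; rewrite -anharmonic_polyE // -subr_eq0.
have n256 : (256 : F) != 0 := natr_exp2_neq0 8 two.
have nD : m ^+ 2 * (m - 1) ^+ 2 * (l ^+ 2 * (l - 1) ^+ 2) != 0.
  move: nsl nsm; rewrite !nonsingularE => nsl nsm.
  by rewrite -!exprMn expf_neq0 // mulf_neq0.
by rewrite -(mulIr_eq0 _ (mulIf nD)) legendre_j_sub // mulNr oppr_eq0 mulf_eq0 (negbTE n256).
Qed.

End Legendre.

Arguments legendre_j {F} l.

Section Weierstrass.
Variable F : fieldType.
Hypothesis two : (2 : F) != 0.

Lemma weier_j_short (a b : F) :
  weier_j (Weier 0 a 0 b 0) = 256 * (a ^+ 2 - 3 * b) ^+ 3 / (b ^+ 2 * (a ^+ 2 - 4 * b)).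
Proof.
rewrite /weier_j /=.
rewrite [X in X ^+ 3 / _](_ : _ = 16 * (a ^+ 2 - 3 * b)); last by ring.
rewrite [X in _ / X](_ : _ = 16 * (b ^+ 2 * (a ^+ 2 - 4 * b))); last by ring.
have n16 : (16 : F) != 0 := natr_exp2_neq0 4 two.
by rewrite exprMn invfM mulrACA exprSr mulfK // mulrA -natrX.
Qed.

Lemma j_JI_legendre (u : F) : j_JI u = legendre_j u.
Proof.
rewrite /j_JI /JI_weier weier_j_short /legendre_j /phi6.
have -> : (- (1 + u)) ^+ 2 - 3 * u = u ^+ 2 - u + 1 by ring.
by have -> : (- (1 + u)) ^+ 2 - 4 * u = (u - 1) ^+ 2 by ring.
Qed.

Lemma j_JQ_legendre (u : F) : u != 1 -> u != -1 -> j_JQ u = legendre_j ((u - 1) / (u + 1)).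
Proof.
rewrite -subr_eq0 -addr_eq0 => u1 um1.
rewrite /j_JQ /JQ_weier weier_j_short /legendre_j /phi6.
have -> : (- (4 * u)) ^+ 2 - 3 * (4 * u ^+ 2 - 4) = 4 * (u ^+ 2 + 3) by ring.
have -> : (- (4 * u)) ^+ 2 - 4 * (4 * u ^+ 2 - 4) = 16 by ring.
have -> : 4 * u ^+ 2 - 4 = 4 * ((u - 1) * (u + 1)) by ring.
have n16 : (16 : F) != 0 := natr_exp2_neq0 4 two.
field; rewrite u1 um1 n16 (_ : u - 1 + -1 * (u + 1) = - 2) ?oppr_eq0 ?two //.
by ring.
Qed.

End Weierstrass.

Section Count.
Variable F : finFieldType.
Hypothesis two : (2 : F) != 0.

Definition nonsingular_set : {set F} := [set l | nonsingular l].
Definition generic_set : {set F} := [set l | nonsingular l && ~~ exceptional l].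
Definition exceptional_set : {set F} := [set l | exceptional l].
Definition harmonic_set : {set F} := [set -1; 2; 2^-1].
Definition equianharmonic_set : {set F} := [set x | phi6 x == 0].

Lemma card_nonsingular_set : #|nonsingular_set| = (#|F| - 2)%N.
Proof.
have -> : nonsingular_set = ~: [set 0; 1] by apply/setP => x; rewrite !inE negb_or.
by rewrite cardsCs setCK cards2 eq_sym oner_neq0.
Qed.

Lemma exceptional_nonsingular (l : F) : exceptional l -> nonsingular l.
Proof.
rewrite /nonsingular; apply: contraTT; rewrite negb_and !negbK /exceptional /phi6.
case/orP=> /eqP ->.
  by have -> : (0 + 1) * (0 - 2) * (2 * 0 - 1) * (0 ^+ 2 - 0 + 1) = 2 :> F by ring.
have -> : (1 + 1) * (1 - 2) * (2 * 1 - 1) * (1 ^+ 2 - 1 + 1) = - 2 :> F by ring.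
by rewrite oppr_eq0.
Qed.

Lemma nonsingular_setE : nonsingular_set = generic_set :|: exceptional_set.
Proof.
apply/setP => l; rewrite !inE.
by case: (boolP (exceptional l)) => [/exceptional_nonsingular ->|]; rewrite ?orbT ?andbT ?orbF.
Qed.

Lemma disjoint_generic_exceptional : [disjoint generic_set & exceptional_set].
Proof.
rewrite -setI_eq0; apply/eqP/setP => l; rewrite !inE.
by case: (exceptional l); rewrite ?andbF.
Qed.

Lemma disjoint_legendre_j_image :
  [disjoint legendre_j @: generic_set & legendre_j @: exceptional_set].
Proof.
rewrite -setI_eq0; apply/eqP/setP => y; rewrite in_set0.
apply/setIP => -[/imsetP[a + ->] /imsetP[b]]; rewrite !inE => /andP[nsa ea] eb.
move/esym/eqP; rewrite (eq_legendre_j two nsa (exceptional_nonsingular eb)) => ba.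
by move: eb; rewrite (exceptional_anharmonic nsa ba) (negbTE ea).
Qed.

Lemma card_generic_set : #|generic_set| = (6 * #|legendre_j @: generic_set|)%N.
Proof.
apply: card_uniform_fibers => a; rewrite inE => /andP[nsa ea].
have -> : [set b in generic_set | legendre_j b == legendre_j a] = [set b in anharmonic a].
  apply/setP => b; rewrite !in_set; apply/idP/idP => [/andP[/andP[nsb _]]|ba].
    by rewrite (eq_legendre_j two nsa nsb).
  have nsb := anharmonic_nonsingular nsa ba.
  by rewrite nsb (exceptional_anharmonic nsa ba) ea (eq_legendre_j two nsa nsb).
by rewrite cardsE; apply/card_uniqP; exact: uniq_anharmonic.
Qed.

Lemma exceptional_setE : exceptional_set = harmonic_set :|: equianharmonic_set.
Proof.
apply/setP => x; rewrite !inE /exceptional !mulf_eq0 addr_eq0 !subr_eq0 -!orbA.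
by rewrite -[x == 2^-1](inj_eq (mulfI two)) divff.
Qed.

Lemma exceptional_set_char3 : 3 = 0 :> F -> exceptional_set = [set -1].
Proof.
move=> three0; have two_m1 : (2 : F) = -1 by rewrite -(subr0 2) -three0; ring.
rewrite exceptional_setE /harmonic_set /equianharmonic_set two_m1 invrN1.
apply/setP => x; rewrite !inE.
have -> : phi6 x = (x + 1) ^+ 2 - 3 * x by rewrite /phi6; ring.
by rewrite three0 mul0r subr0 expf_eq0 /= addr_eq0 !orbb.
Qed.

Section CharNeq3.
Hypothesis three : (3 : F) != 0.

Lemma card_harmonic_set : #|harmonic_set| = 3%N.
Proof.
have n1 : (-1 : F) != 2 by apply: (neq_of_mul_sub (d := -1) (k := 3)) => //; ring.
have n2 : (-1 : F) != 2^-1.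
  by apply: (neq_of_mul_sub (d := -2) (k := 3)) => //; field.
have n3 : (2 : F) != 2^-1 by apply: (neq_of_mul_sub (d := 2) (k := 3)) => //; field.
by rewrite /harmonic_set -setUA !cardsU1 cards1 !inE (negbTE n1) (negbTE n2) (negbTE n3).
Qed.

Lemma legendre_j_harmonic : legendre_j @: harmonic_set = [set legendre_j (-1)].
Proof.
rewrite /harmonic_set !imsetU !imset_set1.
have n4 : (4 : F) != 0 := natr_exp2_neq0 2 two.
have -> : legendre_j (2 : F) = legendre_j (-1) by rewrite /legendre_j /phi6; field.
have -> : legendre_j (2^-1 : F) = legendre_j (-1).
  by rewrite /legendre_j /phi6; field; rewrite n4 two oner_eq0.
by rewrite !setUid.
Qed.

Lemma legendre_j_m1_neq0 : legendre_j (-1 : F) != 0.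
Proof.
have -> : legendre_j (-1 : F) = 2 ^+ 6 * 3 ^+ 3.
  by rewrite /legendre_j /phi6; field; exact: (natr_exp2_neq0 2 two).
by rewrite mulf_neq0 ?expf_neq0.
Qed.

Lemma disjoint_harmonic_equianharmonic : [disjoint harmonic_set & equianharmonic_set].
Proof.
have n4 : (4 : F) != 0 := natr_exp2_neq0 2 two.
have phi6_m1 : phi6 (-1 : F) = 3 by rewrite /phi6; ring.
have phi6_2 : phi6 (2 : F) = 3 by rewrite /phi6; ring.
have phi6_half : phi6 (2^-1 : F) = 3 / 4 by rewrite /phi6; field; rewrite n4 two.
rewrite -setI_eq0; apply/eqP/setP => x; rewrite !inE -!orbA.
apply/negbTE/andP => -[/or3P[]/eqP-> ].
- by rewrite phi6_m1 (negbTE three).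
- by rewrite phi6_2 (negbTE three).
- by rewrite phi6_half mulf_eq0 invr_eq0 (negbTE three) (negbTE n4).
Qed.

Lemma equianharmonic_setP :
  equianharmonic_set = set0 \/ exists2 r, equianharmonic_set = [set r; 1 - r] & r != 1 - r.
Proof.
case: (set_0Vmem equianharmonic_set) => [-> | [r]]; [by left | rewrite inE => /eqP r0].
right; exists r.
  apply/setP => x; rewrite !inE.
  have -> : phi6 x = (x - r) * (x - (1 - r)) by rewrite -[phi6 x]subr0 -{1}r0 /phi6; ring.
  by rewrite mulf_eq0 !subr_eq0.
apply: (neq_of_mul_sub (d := r - (1 - r)) (k := - 3)); last by rewrite oppr_eq0.
by rewrite -[LHS]subr0 -(mulr0 4) -r0 /phi6; ring.
Qed.

End CharNeq3.

Lemma card_exceptional_set :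
  [\/ #|exceptional_set| = 1 /\ #|legendre_j @: exceptional_set| = 1,
      #|exceptional_set| = 3 /\ #|legendre_j @: exceptional_set| = 1 |
      #|exceptional_set| = 5 /\ #|legendre_j @: exceptional_set| = 2]%N.
Proof.
have [three0 | three] := eqVneq (3 : F) 0.
  by apply: Or31; rewrite exceptional_set_char3 // imset_set1 !cards1.
rewrite exceptional_setE imsetU legendre_j_harmonic //.
rewrite card_disjointU ?disjoint_harmonic_equianharmonic // card_harmonic_set //.
case: (equianharmonic_setP three) => [-> | [r Er rr]].
  by apply: Or32; rewrite imset0 setU0 cards0 cards1.
have jE : legendre_j @: equianharmonic_set = [set 0].
  rewrite Er imsetU !imset_set1.
  have j0 x : x \in equianharmonic_set -> legendre_j x = 0.
    by rewrite inE /legendre_j => /eqP ->; rewrite expr0n mulr0 mul0r.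
  by rewrite !j0 ?setUid // Er !inE eqxx ?orbT.
apply: Or33; rewrite jE Er cards2 rr cards2.
by rewrite legendre_j_m1_neq0.
Qed.

Lemma card_legendre_j_image : #|legendre_j @: nonsingular_set| = ((#|F| + 5) %/ 6)%N.
Proof.
have cN := card_nonsingular_set; have cG := card_generic_set.
rewrite nonsingular_setE card_disjointU ?disjoint_generic_exceptional // in cN.
rewrite nonsingular_setE imsetU card_disjointU ?disjoint_legendre_j_image //.
(* [set] merges copies of this cardinal differing only in hidden coercions, which
   [lia] would treat as distinct atoms. *)
rewrite cG in cN; set x := #|legendre_j @: generic_set| in cN *.
by case: card_exceptional_set => -[-> ->] in cN *; lia.
Qed.

Lemma cayley_image :
  [set (u - 1) / (u + 1) | u : F & (u != 1) && (u != -1)] = nonsingular_set.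
Proof.
apply/setP => l; rewrite inE; apply/imsetP/idP => [[u] | /andP[l0 l1]].
  rewrite inE -subr_eq0 -addr_eq0 => /andP[u1 um1] ->.
  rewrite /nonsingular mulf_neq0 ?invr_eq0 //=.
  apply: contra_neq (@divr1_eq _ _ _) _.
  by apply: (neq_of_mul_sub (d := 1) (k := - 2)); rewrite ?oppr_eq0 //; ring.
have l1n : 1 - l != 0 by rewrite subr_eq0 eq_sym.
have n1 : (1 + l) / (1 - l) != 1.
  apply: contra_neq (@divr1_eq _ _ _) _.
  by apply: (neq_of_mul_sub (d := 1) (k := 2 * l)); rewrite ?mulf_neq0 //; ring.
have nm1 : (1 + l) / (1 - l) != -1.
  by apply: (neq_of_mul_sub (d := 1 - l) (k := 2)) => //; field.
exists ((1 + l) / (1 - l)); first by rewrite inE n1 nm1.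
by field; rewrite l1n (_ : 1 + l + (1 - l) = 2) ?two //; ring.
Qed.

Lemma JQ_jsetE : JQ_jset F = legendre_j @: nonsingular_set.
Proof.
rewrite /JQ_jset -cayley_image -imset_comp.
by apply: eq_in_imset => u; rewrite inE => /andP[u1 um1]; exact: j_JQ_legendre.
Qed.

Lemma JI_jsetE : JI_jset F = legendre_j @: nonsingular_set.
Proof. by apply: eq_imset => u; exact: j_JI_legendre. Qed.

End Count.

Local Close Scope ring_scope.

Theorem mainTheorem8 (F : finFieldType) (p : nat) :
  p \in [pchar F]%R -> 3 <= p ->
  J_JQ F = (#|F| + 5) %/ 6 /\ J_JI F = (#|F| + 5) %/ 6.
Proof.
move=> pcharFp p_ge3.
have two : (2 : F)%R != 0%R.
  rewrite -(dvdn_pcharf pcharFp); apply/negP => /(dvdn_leq (isT : 0 < 2)); lia.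
by rewrite /J_JQ /J_JI JQ_jsetE // JI_jsetE // card_legendre_j_image.
Qed.
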